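(* For $u_1,u_2>0$ let $$M(u_1,u_2)=u_1+u_2-2i\sum_{r,s=1}^{\infty}\frac{(iu_1)^r(iu_2)^s\,(r+s-2)!}{r!\,s!\,(r-1)!\,(s-1)!}.$$ Consider the points $u>0$ such that $(u,u)$ is a stationary point of $M$, i.e. $\frac{\partial M}{\partial u_1}(u,u)=\frac{\partial M}{\partial u_2}(u,u)=0$, and to each such point associate $\tau=M(u,u)/(2i)$. Among all these values, the one of smallest modulus is $\tau_s=M(u_s,u_s)/(2i)$, where $u_s\approx1.202$ is the smallest such point (the smallest positive $u$ with $J_0(2u)=0$, $J_0$ the Bessel function of the first kind). *)

From Stdlib Require Import Reals Arith Factorial.
From Coquelicot Require Import Coquelicot.
Open Scope R_scope.

(* Sum of a complex series, computed componentwise (coincides with the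
   actual sum whenever the series converges, which is the case here). *)
Definition CSeries (a : nat -> C) : C :=
  (Series (fun n => Re (a n)), Series (fun n => Im (a n))).

Definition coefM (r s : nat) : R :=
  INR (fact (r + s - 2)) /
  (INR (fact r) * INR (fact s) * INR (fact (r - 1)) * INR (fact (s - 1))).

Definition termM (u1 u2 : R) (r s : nat) : C :=
  (Cpow (Ci * RtoC u1) r * Cpow (Ci * RtoC u2) s * RtoC (coefM r s))%C.

(* Double series over r, s >= 1 (iterated; it is absolutely convergent). *)
Definition SM (u1 u2 : R) : C :=
  CSeries (fun n => CSeries (fun m => termM u1 u2 (S n) (S m))).

Definition M (u1 u2 : R) : C :=
  (RtoC (u1 + u2) - RtoC 2 * Ci * SM u1 u2)%C.

Definition J0 (x : R) : R :=
  Series (fun k => (-1) ^ k * (x / 2) ^ (2 * k) / (INR (fact k)) ^ 2).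

Definition stationary_diag (u : R) : Prop :=
  0 < u /\
  is_derive (fun x => M x u) u (RtoC 0) /\
  is_derive (fun y => M u y) u (RtoC 0).

Definition tau (u : R) : C := (M u u / (RtoC 2 * Ci))%C.

(* Regrouping the double series S along antidiagonals and
   summing the inner sums with Vandermonde's identity gives
   dM/du1 (u,u) = dM/du2 (u,u) = E(u) := sum_n (2n)!/(n!)^3 (iu)^n, and tau(u) = T(u) with
   T' = -iE, T(0) = 0.  The series E solves u E'' + (1 - 4iu) E' - 2i E = 0, so
   e^{-2iu} E(u) and A(u) := J0(2u) both solve u y'' + y' + 4u y = 0 with y(0) = 1; an energy
   estimate shows that this problem has a unique solution on [0, oo), hence E(u) = e^{2iu} A(u)
   and the stationary points are exactly the positive zeros of A.  Integrating,
   T(u) = e^{2iu} (u A'(u)/2 - i u A(u)), so |tau(u)|^2 = (u A'/2)^2 + (u A)^2, whose derivative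
   is 2u A^2 >= 0: |tau| is nondecreasing and the first stationary point minimises it.  A Taylor
   polynomial of A with a geometric bound on the tail puts its first zero in (1.2, 1.21). *)

From Stdlib Require Import Reals Lra Lia Psatz Factorial.
From Coquelicot Require Import Coquelicot.
Open Scope R_scope.

(** * Factorials and binomial coefficients *)

Definition factR (n : nat) : R := INR (fact n).

Lemma factR_pos n : 0 < factR n.
Proof. apply lt_0_INR, lt_O_fact. Qed.

Lemma factR_ge_1 n : 1 <= factR n.
Proof. apply (le_INR 1), lt_O_fact. Qed.

Lemma factR_S n : factR (S n) = INR (S n) * factR n.
Proof. unfold factR. rewrite <- mult_INR. reflexivity. Qed.

Fixpoint binom (n k : nat) : nat :=
  match n, k with
  | _, O => 1%nat
  | O, S _ => 0%nat
  | S n', S k' => (binom n' k' + binom n' (S k'))%nat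
  end.

Lemma binom_0_r n : binom n 0 = 1%nat.
Proof. now destruct n. Qed.

Lemma binom_gt n k : (n < k)%nat -> binom n k = 0%nat.
Proof.
  revert k; induction n as [|n IH]; intros [|k] Hk; try lia; trivial.
  simpl. rewrite !IH by lia. reflexivity.
Qed.

Lemma binom_fact n k : (k <= n)%nat -> (binom n k * fact k * fact (n - k) = fact n)%nat.
Proof.
  revert k; induction n as [|n IH]; intros [|k] Hk; try lia.
  - reflexivity.
  - rewrite binom_0_r, Nat.sub_0_r. simpl. lia.
  - cbn [binom fact]. replace (S n - S k)%nat with (n - k)%nat by lia.
    destruct (Nat.eq_dec k n) as [->|Hne].
    + rewrite (binom_gt n (S n)), Nat.sub_diag by lia.
      specialize (IH n (le_n n)). rewrite Nat.sub_diag in IH. cbn [fact] in *. nia.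
    + assert (H1 := IH k ltac:(lia)). assert (H2 := IH (S k) ltac:(lia)).
      replace (n - k)%nat with (S (n - S k)) in * by lia.
      cbn [fact] in *. nia.
Qed.

Lemma binom_le_pow2 n k : (binom n k <= 2 ^ n)%nat.
Proof.
  revert k; induction n as [|n IH]; intros [|k]; simpl; try lia.
  - assert (H := Nat.pow_nonzero 2 n). lia.
  - specialize (IH k) as H1. specialize (IH (S k)) as H2. lia.
Qed.

Lemma binomR n k : (k <= n)%nat -> INR (binom n k) = factR n / (factR k * factR (n - k)).
Proof.
  intros H. unfold factR. rewrite <- (binom_fact n k H), !mult_INR.
  field. split; apply not_0_INR, fact_neq_0.
Qed.

Lemma factR_add_le n m : factR (n + m) <= 2 ^ (n + m) * factR n * factR m.
Proof.
  assert (E := binom_fact (n + m) n ltac:(lia)).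
  replace (n + m - n)%nat with m in E by lia.
  assert (Hb := le_INR _ _ (binom_le_pow2 (n + m) n)).
  rewrite pow_INR in Hb. simpl (INR 2) in Hb.
  unfold factR. rewrite <- E, !mult_INR.
  apply Rmult_le_compat_r; [apply pos_INR|]. apply Rmult_le_compat_r; [apply pos_INR|].
  exact Hb.
Qed.

Lemma sum_f_R0_zero (f : nat -> R) N :
  (forall i, (i <= N)%nat -> f i = 0) -> sum_f_R0 f N = 0.
Proof.
  induction N as [|N IH]; intros H; simpl.
  - apply H; lia.
  - rewrite IH, (H (S N)) by (intros; try apply H; lia). ring.
Qed.

Lemma vandermonde a b k :
  sum_f_R0 (fun j => INR (binom a j) * INR (binom b (k - j))) k = INR (binom (a + b) k).
Proof.
  revert b k; induction a as [|a IH]; intros b [|k].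
  - simpl. rewrite !binom_0_r. simpl. ring.
  - rewrite decomp_sum, sum_f_R0_zero by (intros; simpl; ring || lia).
    rewrite binom_0_r. simpl. ring.
  - simpl. rewrite !binom_0_r. simpl. ring.
  - rewrite decomp_sum by lia. simpl pred.
    rewrite (sum_eq _ (fun i => INR (binom a i) * INR (binom b (k - i))
                              + INR (binom a (S i)) * INR (binom b (k - i)))).
    2:{ intros i _. simpl binom. rewrite plus_INR.
        replace (S k - S i)%nat with (k - i)%nat by lia. ring. }
    rewrite plus_sum, IH.
    assert (E := IH b (S k)). rewrite decomp_sum in E by lia. simpl pred in E.
    rewrite binom_0_r, Nat.sub_0_r in E.
    cbn [Nat.add binom]. rewrite plus_INR. simpl INR in *. lra.
Qed.

(** * Double series *)

Lemma is_series_sum_f_R0 (a : nat -> R) (l : R) :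
  is_series a l <-> is_lim_seq (fun N => sum_f_R0 a N) l.
Proof.
  split; intros H.
  - apply (is_lim_seq_ext (sum_n a)); [apply sum_n_Reals | exact H].
  - apply (is_lim_seq_ext _ (sum_n a)) in H; [exact H | intros; symmetry; apply sum_n_Reals].
Qed.

Lemma ex_series_pow_div_fact (x : R) : ex_series (fun k => x ^ k / factR k).
Proof.
  eexists. apply is_series_ext with (2 := is_exp_Reals x). intros k.
  rewrite pow_n_pow. unfold scal; simpl. unfold mult; simpl. unfold factR, Rdiv. ring.
Qed.

Lemma Series_zero (a : nat -> R) : (forall n, a n = 0) -> Series a = 0.
Proof.
  intros H. rewrite (Series_ext a (fun n => 0 * a n)), Series_scal_l; [ring|].
  intros n. rewrite H. ring.
Qed.

Lemma Series_dominated (f g : nat -> R) :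
  (forall k, Rabs (f k) <= g k) -> ex_series g ->
  ex_series f /\ Rabs (Series f) <= Series g.
Proof.
  intros H Hg.
  assert (Ha : ex_series (fun k => Rabs (f k))).
  { apply (@ex_series_le R_AbsRing R_CompleteNormedModule _ g); [|exact Hg].
    intros k. change (Rabs (Rabs (f k)) <= g k). rewrite Rabs_Rabsolu. apply H. }
  split; [now apply ex_series_Rabs|].
  eapply Rle_trans; [now apply Series_Rabs|].
  apply Series_le; [|exact Hg]. intros k; split; [apply Rabs_pos | apply H].
Qed.

Lemma Series_dominated_scal (f g : nat -> R) (c : R) :
  (forall k, Rabs (f k) <= c * g k) -> ex_series g ->
  ex_series f /\ Rabs (Series f) <= c * Series g.
Proof.
  intros H Hg. rewrite <- Series_scal_l.
  apply Series_dominated; [exact H | now apply (ex_series_scal_l c g)].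
Qed.

Lemma sum_f_R0_le_Series (p : nat -> R) N :
  (forall n, 0 <= p n) -> ex_series p -> sum_f_R0 p N <= Series p.
Proof.
  intros Hp Hs. apply (is_lim_seq_incr_compare (fun N => sum_f_R0 p N)).
  - apply is_series_sum_f_R0, Series_correct, Hs.
  - intros n. simpl. specialize (Hp (S n)). lra.
Qed.

Lemma Series_nonneg (p : nat -> R) : (forall n, 0 <= p n) -> ex_series p -> 0 <= Series p.
Proof.
  intros Hp Hs. apply Rle_trans with (sum_f_R0 p 0); [apply Hp|].
  now apply sum_f_R0_le_Series.
Qed.

Lemma Series_tail_lim (p : nat -> R) :
  ex_series p -> is_lim_seq (fun N => Series (fun k => p (S N + k)%nat)) 0.
Proof.
  intros Hs.
  apply is_lim_seq_ext with (fun N => Series p - sum_f_R0 p N).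
  { intros N. rewrite (Series_incr_n p (S N)) by (lia || assumption). simpl pred. ring. }
  replace (Finite 0) with (Rbar_minus (Series p) (Series p)) by (simpl; f_equal; ring).
  apply is_lim_seq_minus'; [apply is_lim_seq_const|].
  apply is_series_sum_f_R0, Series_correct, Hs.
Qed.

Lemma sum_f_R0_swap (a : nat -> nat -> R) N M :
  sum_f_R0 (fun n => sum_f_R0 (fun m => a n m) M) N =
  sum_f_R0 (fun m => sum_f_R0 (fun n => a n m) N) M.
Proof.
  induction N as [|N IH]; simpl; [reflexivity|]. now rewrite IH, <- plus_sum.
Qed.

Section SeriesSwap.
Variables (a : nat -> nat -> R) (p q : nat -> R).
Hypotheses (p_ge0 : forall n, 0 <= p n) (q_ge0 : forall m, 0 <= q m)
  (ex_p : ex_series p) (ex_q : ex_series q)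
  (a_le : forall n m, Rabs (a n m) <= p n * q m).

Let tail (r : nat -> R) N := Series (fun k => r (S N + k)%nat).

Lemma row_tail_le n s :
  ex_series (fun k => a n (s + k)%nat) /\
  Rabs (Series (fun k => a n (s + k)%nat)) <= p n * Series (fun k => q (s + k)%nat).
Proof. apply Series_dominated_scal; [intros; apply a_le | now apply ex_series_incr_n]. Qed.

Lemma col_tail_le m s :
  ex_series (fun k => a (s + k)%nat m) /\
  Rabs (Series (fun k => a (s + k)%nat m)) <= q m * Series (fun k => p (s + k)%nat).
Proof.
  apply Series_dominated_scal; [intros; rewrite Rmult_comm; apply a_le|].
  now apply ex_series_incr_n.
Qed.

Lemma ex_series_cols : ex_series (fun m => Series (fun n => a n m)).
Proof.
  apply (Series_dominated _ (fun m => q m * Series p)); [|now apply ex_series_scal_r].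
  intros m. exact (proj2 (col_tail_le m 0)).
Qed.

(* Both partial sums contain the square [0, N]^2; they differ by two tails. *)
Lemma partial_sums_swap_diff N :
  Rabs (sum_f_R0 (fun n => Series (a n)) N - sum_f_R0 (fun m => Series (fun n => a n m)) N)
  <= Series p * tail q N + Series q * tail p N.
Proof.
  rewrite (sum_eq (fun n => Series (a n))
             (fun n => sum_f_R0 (a n) N + Series (fun k => a n (S N + k)%nat))).
  2:{ intros n _. apply (Series_incr_n (a n) (S N)); [lia | apply (row_tail_le n 0)]. }
  rewrite (sum_eq (fun m => Series (fun n => a n m))
             (fun m => sum_f_R0 (fun n => a n m) N + Series (fun k => a (S N + k)%nat m))).
  2:{ intros m _. apply (Series_incr_n (fun n => a n m) (S N)); [lia | apply (col_tail_le m 0)]. }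
  rewrite !plus_sum, sum_f_R0_swap.
  match goal with
  | |- Rabs (?S + ?X - (?S + ?Y)) <= _ => replace (S + X - (S + Y)) with (X - Y) by ring
  end.
  eapply Rle_trans; [apply Rabs_triang|]. rewrite Rabs_Ropp.
  assert (Htail : forall r, (forall n, 0 <= r n) -> ex_series r -> 0 <= tail r N).
  { intros r Hr Hs.
    apply Series_nonneg; [intros; apply Hr | now apply (ex_series_incr_n r (S N))]. }
  apply Rplus_le_compat; (eapply Rle_trans; [apply sum_f_R0_triangle|]).
  - apply Rle_trans with (sum_f_R0 (fun n => p n * tail q N) N).
    + apply sum_Rle. intros n _. apply row_tail_le.
    + rewrite <- scal_sum, Rmult_comm. apply Rmult_le_compat_r; [now apply Htail|].
      now apply sum_f_R0_le_Series.
  - apply Rle_trans with (sum_f_R0 (fun m => q m * tail p N) N).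
    + apply sum_Rle. intros m _. apply col_tail_le.
    + rewrite <- scal_sum, Rmult_comm. apply Rmult_le_compat_r; [now apply Htail|].
      now apply sum_f_R0_le_Series.
Qed.

Theorem Series_swap :
  Series (fun n => Series (a n)) = Series (fun m => Series (fun n => a n m)).
Proof.
  apply is_series_unique, is_series_sum_f_R0.
  set (Rows := fun N => sum_f_R0 (fun n => Series (a n)) N).
  set (Cols := fun N => sum_f_R0 (fun m => Series (fun n => a n m)) N).
  assert (Hdiff : is_lim_seq (fun N => Rows N - Cols N) 0).
  { apply is_lim_seq_abs_0.
    apply is_lim_seq_le_le with (fun _ => 0) (fun N => Series p * tail q N + Series q * tail p N).
    - intros N. split; [apply Rabs_pos | apply partial_sums_swap_diff].
    - apply is_lim_seq_const.
    - assert (H := is_lim_seq_plus' _ _ _ _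
        (is_lim_seq_scal_l _ (Series p) _ (Series_tail_lim q ex_q))
        (is_lim_seq_scal_l _ (Series q) _ (Series_tail_lim p ex_p))).
      simpl in H. now rewrite !Rmult_0_r, Rplus_0_r in H. }
  assert (Hcols := proj1 (is_series_sum_f_R0 _ _) (Series_correct _ ex_series_cols)).
  apply (is_lim_seq_ext (fun N => (Rows N - Cols N) + Cols N)); [intros; unfold Cols; ring|].
  rewrite <- (Rplus_0_l (Series (fun m => Series (fun n => a n m)))).
  now apply (is_lim_seq_plus' _ _ 0).
Qed.

End SeriesSwap.

Lemma inv_factR_mul_le n m : / (factR n * factR m) <= 2 ^ (n + m) / factR (n + m).
Proof.
  assert (Hn := factR_pos n). assert (Hm := factR_pos m). assert (Hnm := factR_pos (n + m)).
  assert (H := factR_add_le n m).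
  apply (Rmult_le_reg_r (factR n * factR m * factR (n + m)));
    [repeat apply Rmult_lt_0_compat; lra|].
  replace (/ (factR n * factR m) * (factR n * factR m * factR (n + m))) with (factR (n + m))
    by (field; lra).
  replace (2 ^ (n + m) / factR (n + m) * (factR n * factR m * factR (n + m)))
    with (2 ^ (n + m) * factR n * factR m) by (field; lra).
  exact H.
Qed.

Lemma pow2_le_inv2_pow_4_pow k n : (n <= k)%nat -> 2 ^ k <= (/ 2) ^ n * 4 ^ k.
Proof.
  intros H.
  replace ((/ 2) ^ n * 4 ^ k) with (2 ^ (2 * k - n)).
  - apply Rle_pow; lra || lia.
  - rewrite pow_inv. replace 4 with (2 ^ 2) by ring. rewrite <- pow_mult.
    replace (2 * k)%nat with (2 * k - n + n)%nat at 2 by lia.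
    rewrite pow_add, Nat.mul_comm. field. apply pow_nonzero. lra.
Qed.

Section Antidiagonal.
Variables (f : nat -> nat -> R) (c L : R).
Hypotheses (L_ge0 : 0 <= L)
  (f_le : forall n m, Rabs (f n m) <= c * L ^ (n + m) / (factR n * factR m)).

(* [p n * q k] dominates [b n k = f n (k - n)] because [1/(n! (k-n)!) <= 2^k/k!]
   and [2^k <= 2^(-n) 4^k] for [n <= k]. *)
Let b n k := if (n <=? k)%nat then f n (k - n) else 0.
Let p n := (/ 2) ^ n.
Let q k := c * (4 * L) ^ k / factR k.

Lemma antidiag_c_ge0 : 0 <= c.
Proof.
  assert (H := f_le 0 0). unfold factR in H. simpl in H.
  assert (0 <= Rabs (f 0%nat 0%nat)) by apply Rabs_pos. lra.
Qed.

Lemma antidiag_q_ge0 k : 0 <= q k.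
Proof.
  assert (Hc := antidiag_c_ge0). unfold q.
  apply Rmult_le_pos; [|apply Rlt_le, Rinv_0_lt_compat, factR_pos].
  apply Rmult_le_pos; [lra | apply pow_le; lra].
Qed.

Lemma antidiag_ex_q : ex_series q.
Proof.
  apply (@ex_series_ext R_AbsRing R_NormedModule (fun k => c * ((4 * L) ^ k / factR k))).
  - intros k. unfold q, Rdiv. symmetry. apply Rmult_assoc.
  - apply (ex_series_scal_l c (fun k => (4 * L) ^ k / factR k)), ex_series_pow_div_fact.
Qed.

Lemma antidiag_b_le n k : Rabs (b n k) <= p n * q k.
Proof.
  assert (Hc := antidiag_c_ge0). assert (Hq := antidiag_q_ge0 k).
  assert (Hp : 0 <= p n) by (apply pow_le; lra).
  unfold b. destruct (Nat.leb_spec n k) as [Hnk|Hnk]; [|rewrite Rabs_R0; nra].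
  eapply Rle_trans; [apply f_le|]. replace (n + (k - n))%nat with k by lia.
  assert (Hf := inv_factR_mul_le n (k - n)). replace (n + (k - n))%nat with k in Hf by lia.
  assert (H2 := pow2_le_inv2_pow_4_pow k n Hnk).
  assert (HcL : 0 <= c * L ^ k) by (apply Rmult_le_pos; [lra | apply pow_le; lra]).
  assert (Hk := factR_pos k).
  unfold Rdiv. apply Rle_trans with (c * L ^ k * (2 ^ k / factR k)); [now apply Rmult_le_compat_l|].
  unfold p, q. rewrite Rpow_mult_distr.
  replace (c * L ^ k * (2 ^ k / factR k)) with (c * L ^ k / factR k * 2 ^ k) by (field; lra).
  replace ((/ 2) ^ n * (c * (4 ^ k * L ^ k) / factR k))
    with (c * L ^ k / factR k * ((/ 2) ^ n * 4 ^ k))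
    by (field; lra).
  apply Rmult_le_compat_l; [apply Rdiv_le_0_compat|]; lra.
Qed.

Theorem Series_antidiag :
  Series (fun n => Series (f n)) = Series (fun k => sum_f_R0 (fun n => f n (k - n)) k).
Proof.
  assert (Hp0 : forall n, 0 <= p n) by (intros; apply pow_le; lra).
  assert (Hp : ex_series p) by (apply ex_series_geom; rewrite Rabs_pos_eq; lra).
  rewrite (Series_ext _ (fun n => Series (b n))).
  - rewrite (Series_swap b p q Hp0 antidiag_q_ge0 Hp antidiag_ex_q antidiag_b_le).
    apply Series_ext. intros k.
    rewrite (Series_incr_n _ (S k)); [|lia|].
    + rewrite Series_zero, Rplus_0_r.
      * apply sum_eq. intros n Hn. unfold b. now rewrite (proj2 (Nat.leb_le n k)).
      * intros m. unfold b. now rewrite (proj2 (Nat.leb_gt (S k + m) k)) by lia.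
    + apply (Series_dominated_scal _ (fun n => p n) (q k)); [|exact Hp].
      intros n. rewrite Rmult_comm. apply antidiag_b_le.
  - intros n. rewrite (Series_incr_n_aux (b n) n).
    + apply Series_ext. intros m. unfold b. rewrite (proj2 (Nat.leb_le n (n + m))) by lia.
      f_equal. lia.
    + intros k Hk. unfold b. now rewrite (proj2 (Nat.leb_gt n k)) by lia.
Qed.

End Antidiagonal.

(** * Entire power series and real calculus *)

Definition entire (a : nat -> R) : Prop := forall x, Rbar_lt (Rabs x) (CV_radius a).

Lemma entire_of_factorial_bound (a : nat -> R) (C K : R) : 0 <= K ->
  (forall n, Rabs (a n) <= C * K ^ n / factR n) -> entire a.
Proof.
  intros HK Ha x.
  set (r := Rabs x + 1).
  assert (Hr : 0 <= r) by (unfold r; assert (0 <= Rabs x) by apply Rabs_pos; lra).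
  assert (Hd : CV_disk a r).
  { apply (@ex_series_le R_AbsRing R_CompleteNormedModule _ (fun n => C * ((K * r) ^ n / factR n))).
    - intros n. change (Rabs (Rabs (a n * r ^ n)) <= C * ((K * r) ^ n / factR n)).
      rewrite Rabs_Rabsolu, Rabs_mult, Rpow_mult_distr, (Rabs_pos_eq (r ^ n))
        by (apply pow_le; lra).
      replace (C * (K ^ n * r ^ n / factR n)) with ((C * K ^ n / factR n) * r ^ n)
        by (unfold Rdiv; ring).
      apply Rmult_le_compat_r; [apply pow_le; lra | apply Ha].
    - apply (ex_series_scal_l C (fun n => (K * r) ^ n / factR n)), ex_series_pow_div_fact. }
  assert (Hl : Rbar_le r (CV_radius a)) by now apply (proj1 (Lub_Rbar_correct (CV_disk a))).
  unfold r in Hl. destruct (CV_radius a) as [l| |]; simpl in *; easy || lra.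
Qed.

Lemma entire_derive (a : nat -> R) : entire a -> entire (PS_derive a).
Proof. intros H x. rewrite CV_radius_derive. apply H. Qed.

Lemma entire_incr_1 (a : nat -> R) : entire a -> entire (PS_incr_1 a).
Proof. intros H x. rewrite CV_radius_incr_1. apply H. Qed.

Lemma is_derive_entire (a : nat -> R) : entire a ->
  forall x, is_derive (PSeries a) x (PSeries (PS_derive a) x).
Proof. intros H x. apply is_derive_PSeries, H. Qed.

Lemma PSeries_split_0 (a : nat -> R) x : Rbar_lt (Rabs x) (CV_radius a) ->
  PSeries a x = a 0%nat + Series (fun k => a (S k) * x ^ S k).
Proof.
  intros H. unfold PSeries. rewrite Series_incr_1; [simpl; ring|].
  apply (ex_series_ext (fun k => scal (pow_n x k) (a k))); [intros; apply Rmult_comm|].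
  now apply CV_radius_inside.
Qed.

Lemma PSeries_split_01 (a : nat -> R) x : entire a ->
  PSeries a x = a 0%nat + a 1%nat * x + Series (fun k => a (S (S k)) * x ^ S (S k)).
Proof.
  intros H. rewrite PSeries_split_0 by apply H. rewrite Series_incr_1; [simpl; ring|].
  apply (ex_series_incr_1 (fun k => a k * x ^ k)).
  apply (ex_series_ext (fun k => scal (pow_n x k) (a k))); [intros; apply Rmult_comm|].
  apply CV_radius_inside, H.
Qed.

Lemma PSeries_lincomb4 (a b c d : nat -> R) (ka kb kc kd x : R) :
  entire a -> entire b -> entire c -> entire d ->
  ka * PSeries a x + kb * PSeries b x + kc * PSeries c x + kd * PSeries d x =
  PSeries (fun n => ka * a n + kb * b n + kc * c n + kd * d n) x.
Proof.
  intros Ha Hb Hc Hd.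
  assert (Hs : forall e k, entire e -> ex_pseries (PS_scal k e) x).
  { intros e k He. apply ex_pseries_scal; [apply Rmult_comm | apply CV_radius_inside, He]. }
  assert (Hab := ex_pseries_plus _ _ _ (Hs a ka Ha) (Hs b kb Hb)).
  assert (Habc := ex_pseries_plus _ _ _ Hab (Hs c kc Hc)).
  rewrite <- !PSeries_scal, <- (PSeries_plus _ _ _ (Hs a ka Ha) (Hs b kb Hb)),
    <- (PSeries_plus _ _ _ Hab (Hs c kc Hc)), <- (PSeries_plus _ _ _ Habc (Hs d kd Hd)).
  apply PSeries_ext. intros n. reflexivity.
Qed.

Lemma PSeries_coef_0 (a : nat -> R) x : (forall n, a n = 0) -> PSeries a x = 0.
Proof. intros H. rewrite <- (PSeries_const_0 x). now apply PSeries_ext. Qed.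

(* Coquelicot's rules are stated with [plus], [minus], [mult] and [opp], which [apply]
   does not unify with [+], [-], [*] and unary [-] on R. *)
Lemma is_derive_Rplus (f g : R -> R) x a b :
  is_derive f x a -> is_derive g x b -> is_derive (fun t => f t + g t) x (a + b).
Proof. apply (is_derive_plus f g x a b). Qed.

Lemma is_derive_Rminus (f g : R -> R) x a b :
  is_derive f x a -> is_derive g x b -> is_derive (fun t => f t - g t) x (a - b).
Proof. apply (is_derive_minus f g x a b). Qed.

Lemma is_derive_Rmult (f g : R -> R) x a b :
  is_derive f x a -> is_derive g x b -> is_derive (fun t => f t * g t) x (a * g x + f x * b).
Proof. intros Hf Hg. apply (is_derive_mult f g x a b Hf Hg Rmult_comm). Qed.

Lemma is_derive_Ropp (f : R -> R) x a : is_derive f x a -> is_derive (fun t => - f t) x (- a).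
Proof. apply (is_derive_opp f x a). Qed.

Lemma is_derive_pair (f g : R -> R) x l1 l2 :
  is_derive f x l1 -> is_derive g x l2 ->
  @is_derive R_AbsRing C_R_NormedModule (fun t => (f t, g t) : C) x (l1, l2).
Proof.
  intros H1 H2.
  apply (filterdiff_comp_2 f g (fun a b => (a, b) : C) _ _ (fun a b => (a, b) : C) H1 H2).
  apply filterdiff_linear, (is_linear_prod (fun t : R * R => fst t) (fun t => snd t)).
  - apply is_linear_fst.
  - apply is_linear_snd.
Qed.

Lemma is_derive_Re (F : R -> C) x l :
  @is_derive R_AbsRing C_R_NormedModule F x l -> is_derive (fun t => Re (F t)) x (Re l).
Proof. intros H. apply (filterdiff_comp F fst _ fst H), filterdiff_linear, is_linear_fst. Qed.

Lemma is_derive_Im (F : R -> C) x l :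
  @is_derive R_AbsRing C_R_NormedModule F x l -> is_derive (fun t => Im (F t)) x (Im l).
Proof. intros H. apply (filterdiff_comp F snd _ snd H), filterdiff_linear, is_linear_snd. Qed.

Lemma is_derive_C_unique (F : R -> C) x l1 l2 :
  @is_derive R_AbsRing C_R_NormedModule F x l1 ->
  @is_derive R_AbsRing C_R_NormedModule F x l2 -> l1 = l2.
Proof.
  intros H1 H2. apply injective_projections.
  - change (Re l1 = Re l2).
    apply is_derive_Re, is_derive_unique in H1. apply is_derive_Re, is_derive_unique in H2.
    now rewrite <- H1, <- H2.
  - change (Im l1 = Im l2).
    apply is_derive_Im, is_derive_unique in H1. apply is_derive_Im, is_derive_unique in H2.
    now rewrite <- H1, <- H2.
Qed.

Lemma derive_nonpos_le (f df : R -> R) a b : a <= b ->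
  (forall x, a <= x <= b -> is_derive f x (df x)) ->
  (forall x, a <= x <= b -> df x <= 0) -> f b <= f a.
Proof.
  intros Hab Hd Hneg.
  destruct (MVT_gen f a b df) as [c [Hc E]]; rewrite ?Rmin_left, ?Rmax_right in * by lra.
  - intros x Hx. apply Hd. lra.
  - intros x Hx. apply continuity_pt_filterlim, (ex_derive_continuous f x).
    exists (df x). apply Hd. exact Hx.
  - assert (df c <= 0) by (apply Hneg; lra). nra.
Qed.

Lemma derive_zero_eq (f df : R -> R) a b : a <= b ->
  (forall x, a <= x <= b -> is_derive f x (df x)) ->
  (forall x, a <= x <= b -> df x = 0) -> f b = f a.
Proof.
  intros Hab Hd Hz.
  assert (H1 := derive_nonpos_le f df a b Hab Hd (fun x Hx => Req_le _ _ (Hz x Hx))).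
  assert (H2 : - f b <= - f a).
  { apply (derive_nonpos_le (fun t => - f t) (fun t => - df t) a b Hab).
    - intros x Hx. now apply is_derive_Ropp, Hd.
    - intros x Hx. rewrite (Hz x Hx). lra. }
  lra.
Qed.

Lemma eq_of_is_derive_eq (f g df : R -> R) u : 0 <= u ->
  (forall x, 0 <= x <= u -> is_derive f x (df x)) ->
  (forall x, 0 <= x <= u -> is_derive g x (df x)) -> f 0 = g 0 -> f u = g u.
Proof.
  intros Hu Hf Hg H0.
  assert (H := derive_zero_eq (fun t => f t - g t) (fun t => df t - df t) 0 u Hu).
  assert (f u - g u = f 0 - g 0); [|lra].
  apply H; intros x Hx; [apply is_derive_Rminus; [apply Hf | apply Hg]; exact Hx | ring].
Qed.

(* The least zero is the supremum of the lower bounds of the zero set in [a, b]. *)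
Lemma first_zero (f : R -> R) a b : a <= b -> continuity f -> 0 < f a -> f b < 0 ->
  exists z, a < z < b /\ f z = 0 /\ forall v, a <= v < z -> f v <> 0.
Proof.
  intros Hab Hf Ha Hb.
  destruct (IVT_gen f a b 0 Hf) as [z0 [Hz0 Hfz0]];
    rewrite ?Rmin_left, ?Rmax_right, ?Rmin_right, ?Rmax_left in * by lra; [lra|].
  set (L := fun x => forall v, a <= v <= b -> f v = 0 -> x <= v).
  destruct (completeness L) as [z [Hub Hlub]].
  - exists z0. intros x Hx. now apply Hx.
  - exists a. intros v Hv _. lra.
  assert (Hza : a <= z) by (apply Hub; intros v Hv _; lra).
  assert (HzL : L z) by (intros v Hv Hfv; apply Hlub; intros x Hx; now apply Hx).
  assert (Hzb : z <= b) by (assert (H := HzL z0 Hz0 Hfz0); lra).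
  assert (Hfz : f z = 0).
  { destruct (Req_dec (f z) 0) as [|Hne]; [assumption|].
    destruct (continuous_neq_0 f z (Hf z) Hne) as [eps Heps].
    assert (HL : L (z + eps / 2)).
    { intros v Hv Hfv. destruct (Rlt_le_dec v (z + eps / 2)) as [Hlt|]; [|lra].
      assert (Hzv := HzL v Hv Hfv). exfalso. apply (Heps (v - z)).
      - rewrite Rabs_pos_eq; destruct eps; simpl in *; lra.
      - now replace (z + (v - z)) with v by ring. }
    assert (Hle := Hub _ HL). destruct eps; simpl in *; lra. }
  exists z. split; [|split; [exact Hfz|]].
  - split; apply Rnot_le_lt; intros Hle.
    + replace z with a in Hfz by lra. lra.
    + replace z with b in Hfz by lra. lra.
  - intros v Hv Hfv. assert (H := HzL v ltac:(lra) Hfv). lra.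
Qed.

(** * Bessel's equation of order zero *)

(* The equation u y'' + y' + 4 u y = 0 satisfied by y(u) = J0(2u). *)
Definition bessel0_solution (D : R -> R) : Prop :=
  exists D1 D2 : R -> R,
    (forall t, is_derive D t (D1 t)) /\ (forall t, is_derive D1 t (D2 t)) /\
    (forall t, t * D2 t + D1 t + 4 * t * D t = 0).

(* For u >= 0 the energy D'^2 + 4 D^2 is nonincreasing along a solution. *)
Lemma bessel0_solution_eq_0 (D : R -> R) :
  bessel0_solution D -> D 0 = 0 -> forall u, 0 <= u -> D u = 0.
Proof.
  intros (D1 & D2 & HD & HD1 & Hode) H0 u Hu.
  assert (H10 : D1 0 = 0) by (assert (H := Hode 0); lra).
  set (V := fun t => D1 t * D1 t + 4 * (D t * D t)).
  assert (HV : V u <= V 0).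
  { apply (derive_nonpos_le V (fun t => 2 * D1 t * (D2 t + 4 * D t))); [exact Hu | |].
    - intros x _. unfold V.
      replace (2 * D1 x * (D2 x + 4 * D x))
        with (D2 x * D1 x + D1 x * D2 x + 4 * (D1 x * D x + D x * D1 x)) by ring.
      apply is_derive_Rplus; [|apply is_derive_scal]; apply is_derive_Rmult; auto.
    - intros x [Hx0 _]. destruct (Req_dec x 0) as [->|Hx]; [rewrite H10; lra|].
      replace (D2 x + 4 * D x) with ((x * D2 x + 4 * x * D x) / x) by (field; lra).
      replace (x * D2 x + 4 * x * D x) with (- D1 x) by (specialize (Hode x); lra).
      replace (2 * D1 x * (- D1 x / x)) with (- 2 * (D1 x * D1 x) * / x) by (field; lra).
      assert (0 <= D1 x * D1 x) by nra. assert (0 < / x) by (apply Rinv_0_lt_compat; lra). nra. }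
  unfold V in HV. rewrite H10, H0 in HV. nra.
Qed.

Lemma bessel0_solution_minus (D E : R -> R) :
  bessel0_solution D -> bessel0_solution E -> bessel0_solution (fun t => D t - E t).
Proof.
  intros (D1 & D2 & HD & HD1 & HoD) (E1 & E2 & HE & HE1 & HoE).
  exists (fun t => D1 t - E1 t), (fun t => D2 t - E2 t). split; [|split].
  - intros t. now apply is_derive_Rminus.
  - intros t. now apply is_derive_Rminus.
  - intros t. specialize (HoD t). specialize (HoE t). lra.
Qed.

(* The real form of u E'' + E' - 4 i u E' - 2 i E = 0 for E = P + i Q,
   the equation satisfied by E(u) = e^{2iu} J0(2u). *)
Definition coupled_system (P Q : R -> R) : Prop :=
  exists P1 P2 Q1 Q2 : R -> R,
    (forall t, is_derive P t (P1 t)) /\ (forall t, is_derive P1 t (P2 t)) /\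
    (forall t, is_derive Q t (Q1 t)) /\ (forall t, is_derive Q1 t (Q2 t)) /\
    (forall t, t * P2 t + P1 t + 4 * t * Q1 t + 2 * Q t = 0) /\
    (forall t, t * Q2 t + Q1 t - 4 * t * P1 t - 2 * P t = 0).

(* [rot P Q] and [rot Q (- P)] are the real and imaginary parts of e^{-2it} (P + i Q). *)
Definition rot (P Q : R -> R) (t : R) : R := cos (2 * t) * P t + sin (2 * t) * Q t.

Lemma rot_inverse a x y :
  x = cos a * (cos a * x + sin a * y) - sin a * (cos a * y - sin a * x) /\
  y = sin a * (cos a * x + sin a * y) + cos a * (cos a * y - sin a * x).
Proof.
  assert (H := sin2_cos2 a). unfold Rsqr in H. split.
  - transitivity ((sin a * sin a + cos a * cos a) * x); [rewrite H|]; ring.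
  - transitivity ((sin a * sin a + cos a * cos a) * y); [rewrite H|]; ring.
Qed.

Lemma rot_norm a x y : (cos a * x + sin a * y) ^ 2 + (cos a * y - sin a * x) ^ 2 = x ^ 2 + y ^ 2.
Proof.
  assert (H := sin2_cos2 a). unfold Rsqr in H.
  transitivity ((sin a * sin a + cos a * cos a) * (x ^ 2 + y ^ 2)); [ring | rewrite H; ring].
Qed.

Lemma is_derive_rot (P Q : R -> R) t p q :
  is_derive P t p -> is_derive Q t q ->
  is_derive (rot P Q) t (cos (2 * t) * (p + 2 * Q t) + sin (2 * t) * (q - 2 * P t)).
Proof.
  intros HP HQ.
  assert (Hc : is_derive (fun x => cos (2 * x)) t (- 2 * sin (2 * t)))
    by (auto_derive; [easy | ring]).
  assert (Hs : is_derive (fun x => sin (2 * x)) t (2 * cos (2 * t)))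
    by (auto_derive; [easy | ring]).
  replace (cos (2 * t) * (p + 2 * Q t) + sin (2 * t) * (q - 2 * P t))
    with (- 2 * sin (2 * t) * P t + cos (2 * t) * p + (2 * cos (2 * t) * Q t + sin (2 * t) * q))
    by ring.
  apply (is_derive_Rplus (fun x => cos (2 * x) * P x) (fun x => sin (2 * x) * Q x)).
  - now apply (is_derive_Rmult (fun x => cos (2 * x)) P).
  - now apply (is_derive_Rmult (fun x => sin (2 * x)) Q).
Qed.

Lemma coupled_system_rot (P Q : R -> R) : coupled_system P Q -> bessel0_solution (rot P Q).
Proof.
  intros (P1 & P2 & Q1 & Q2 & HP & HP1 & HQ & HQ1 & E1 & E2).
  exists (rot (fun t => P1 t + 2 * Q t) (fun t => Q1 t - 2 * P t)),
         (rot (fun t => P2 t + 2 * Q1 t + 2 * (Q1 t - 2 * P t))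
              (fun t => Q2 t - 2 * P1 t - 2 * (P1 t + 2 * Q t))).
  split; [|split]; intros t.
  - now apply is_derive_rot.
  - apply (is_derive_rot (fun t => P1 t + 2 * Q t) (fun t => Q1 t - 2 * P t)).
    + apply is_derive_Rplus; [|apply is_derive_scal]; auto.
    + apply is_derive_Rminus; [|apply is_derive_scal]; auto.
  - specialize (E1 t). specialize (E2 t). unfold rot.
    transitivity (cos (2 * t) * (t * P2 t + P1 t + 4 * t * Q1 t + 2 * Q t)
                  + sin (2 * t) * (t * Q2 t + Q1 t - 4 * t * P1 t - 2 * P t)); [ring|].
    rewrite E1, E2. ring.
Qed.

Lemma coupled_system_swap (P Q : R -> R) : coupled_system P Q -> coupled_system Q (fun t => - P t).
Proof.
  intros (P1 & P2 & Q1 & Q2 & HP & HP1 & HQ & HQ1 & E1 & E2).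
  exists Q1, Q2, (fun t => - P1 t), (fun t => - P2 t).
  refine (conj HQ (conj HQ1 (conj _ (conj _ (conj _ _))))); intros t.
  - now apply is_derive_Ropp.
  - now apply is_derive_Ropp.
  - specialize (E2 t). lra.
  - specialize (E1 t). lra.
Qed.

(* [J0s u = J0 (2 u)], see [J0_J0s]. *)
Definition J0s_coef (n : nat) : R :=
  if Nat.even n then (-1) ^ Nat.div2 n / factR (Nat.div2 n) ^ 2 else 0.

Definition J0s : R -> R := PSeries J0s_coef.
Definition J0s' : R -> R := PSeries (PS_derive J0s_coef).
Definition J0s'' : R -> R := PSeries (PS_derive (PS_derive J0s_coef)).

Lemma J0s_coef_even k : J0s_coef (2 * k) = (-1) ^ k / factR k ^ 2.
Proof. unfold J0s_coef. now rewrite Nat.even_even, Nat.div2_double. Qed.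

Lemma J0s_coef_odd k : J0s_coef (2 * k + 1) = 0.
Proof. unfold J0s_coef. now rewrite Nat.even_odd. Qed.

Lemma inv_factR_sqr_le k : / factR k ^ 2 <= 4 ^ k / factR (2 * k).
Proof.
  assert (H := inv_factR_mul_le k k). replace (k + k)%nat with (2 * k)%nat in H by lia.
  rewrite pow_mult in H. replace (2 ^ 2) with 4 in H by ring.
  now replace (factR k ^ 2) with (factR k * factR k) by ring.
Qed.

Lemma entire_J0s_coef : entire J0s_coef.
Proof.
  apply (entire_of_factorial_bound _ 1 2); [lra|]. intros n.
  destruct (Nat.Even_or_Odd n) as [[k ->]|[k ->]].
  - rewrite J0s_coef_even. unfold Rdiv.
    rewrite Rabs_mult, pow_1_abs, Rabs_pos_eq
      by (apply Rlt_le, Rinv_0_lt_compat, pow_lt, factR_pos).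
    rewrite pow_mult. replace (2 ^ 2) with 4 by ring. rewrite !Rmult_1_l. apply inv_factR_sqr_le.
  - rewrite J0s_coef_odd, Rabs_R0. apply Rdiv_le_0_compat; [|apply factR_pos].
    rewrite Rmult_1_l. apply pow_le. lra.
Qed.

Lemma is_derive_J0s t : is_derive J0s t (J0s' t).
Proof. apply is_derive_entire, entire_J0s_coef. Qed.

Lemma is_derive_J0s' t : is_derive J0s' t (J0s'' t).
Proof. apply is_derive_entire, entire_derive, entire_J0s_coef. Qed.

Lemma J0s_ode t : t * J0s'' t + J0s' t + 4 * t * J0s t = 0.
Proof.
  assert (H0 := entire_J0s_coef). assert (H1 := entire_derive _ H0).
  assert (H2 := entire_derive _ H1).
  unfold J0s, J0s', J0s''. rewrite Rmult_assoc, <- !PSeries_incr_1.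
  replace (PSeries (PS_incr_1 (PS_derive (PS_derive J0s_coef))) t + PSeries (PS_derive J0s_coef) t
           + 4 * PSeries (PS_incr_1 J0s_coef) t)
    with (1 * PSeries (PS_incr_1 (PS_derive (PS_derive J0s_coef))) t
          + 1 * PSeries (PS_derive J0s_coef) t + 4 * PSeries (PS_incr_1 J0s_coef) t
          + 0 * PSeries J0s_coef t) by ring.
  rewrite PSeries_lincomb4 by first [assumption | apply entire_incr_1; assumption].
  apply PSeries_coef_0. intros [|m]; unfold PS_incr_1, PS_derive.
  - change (@zero R_NormedModule) with 0. change (J0s_coef 1) with 0. ring.
  - destruct (Nat.Even_or_Odd m) as [[k ->]|[k ->]].
    + replace (S (S (2 * k))) with (2 * S k)%nat by lia.
      rewrite !J0s_coef_even, factR_S, <- tech_pow_Rmult.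
      replace (INR (2 * S k)) with (2 * INR (S k)) by (rewrite mult_INR; reflexivity).
      replace (INR (S (2 * k))) with (2 * INR (S k) - 1) by (rewrite !S_INR, mult_INR; simpl; ring).
      assert (HS : 0 < INR (S k)) by (apply lt_0_INR; lia). assert (Hk := factR_pos k).
      field. split; lra.
    + replace (S (S (2 * k + 1))) with (2 * S k + 1)%nat by lia.
      rewrite !J0s_coef_odd. ring.
Qed.

Lemma bessel0_solution_J0s : bessel0_solution J0s.
Proof.
  exists J0s', J0s''. split; [|split]; intros t.
  - apply is_derive_J0s.
  - apply is_derive_J0s'.
  - apply J0s_ode.
Qed.

Lemma J0s_0 : J0s 0 = 1.
Proof. unfold J0s. rewrite PSeries_0. unfold J0s_coef, factR. simpl. field. Qed.

Lemma J0_J0s u : J0 (2 * u) = J0s u.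
Proof.
  unfold J0s. rewrite PSeries_odd_even.
  - rewrite (PSeries_ext (fun n => J0s_coef (2 * n + 1)) (fun _ => 0)) by apply J0s_coef_odd.
    rewrite PSeries_const_0, Rmult_0_r, Rplus_0_r.
    unfold J0, PSeries. apply Series_ext. intros k. rewrite J0s_coef_even.
    replace (2 * u / 2) with u by field. rewrite pow_mult. unfold factR, Rdiv. simpl. ring.
  - apply CV_radius_inside. apply (entire_of_factorial_bound _ 1 4); [lra|].
    intros n. rewrite J0s_coef_even. unfold Rdiv.
    rewrite Rabs_mult, pow_1_abs, Rabs_pos_eq
      by (apply Rlt_le, Rinv_0_lt_compat, pow_lt, factR_pos).
    rewrite !Rmult_1_l. assert (H1 := factR_ge_1 n). apply Rle_trans with (/ factR n).
    + apply Rinv_le_contravar; [apply factR_pos | simpl; nra].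
    + rewrite <- (Rmult_1_l (/ factR n)) at 1.
      apply Rmult_le_compat_r; [apply Rlt_le, Rinv_0_lt_compat, factR_pos | apply pow_R1_Rle; lra].
  - apply CV_radius_inside.
    rewrite (CV_radius_ext _ (fun _ => 0)) by apply J0s_coef_odd.
    rewrite CV_radius_const_0. easy.
Qed.

Lemma continuity_J0s : continuity J0s.
Proof.
  intros x. apply continuity_pt_filterlim, (ex_derive_continuous J0s x).
  exists (J0s' x). apply is_derive_J0s.
Qed.

(** * The coefficients of M *)

Definition ecoef (n : nat) : R := factR (2 * n) / factR n ^ 3.

Lemma coefM_S n m :
  coefM (S n) (S m) = factR (n + m) / (factR (S n) * factR (S m) * factR n * factR m).
Proof.
  unfold coefM, factR. replace (S n + S m - 2)%nat with (n + m)%nat by lia.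
  rewrite !Nat.sub_succ, !Nat.sub_0_r. reflexivity.
Qed.

Lemma coefM_S_comm n m : coefM (S n) (S m) = coefM (S m) (S n).
Proof.
  rewrite !coefM_S, Nat.add_comm. field. repeat split; apply Rgt_not_eq, factR_pos.
Qed.

Lemma sum_coefM_antidiag_weighted k :
  sum_f_R0 (fun n => INR (S n) * coefM (S n) (S (k - n))) k = ecoef (S k) / 2.
Proof.
  assert (Hv := vandermonde k (S k) (S k)).
  rewrite tech5, (binom_gt k (S k)), Rmult_0_l, Rplus_0_r in Hv by lia.
  rewrite (sum_eq _ (fun n => INR (binom k n) * INR (binom (S k) (S k - n)) / factR (S k))).
  2:{ intros n Hn. rewrite coefM_S, !binomR by lia.
      replace (S k - (S k - n))%nat with n by lia.
      replace (n + (k - n))%nat with k by lia.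
      replace (S (k - n)) with (S k - n)%nat by lia.
      rewrite factR_S. field. repeat split; try apply Rgt_not_eq, factR_pos.
      apply not_0_INR. lia. }
  unfold Rdiv at 1. rewrite <- scal_sum, Hv, binomR by lia.
  replace (k + S k - S k)%nat with k by lia.
  unfold ecoef. replace (2 * S k)%nat with (S (k + S k)) by lia.
  rewrite factR_S, (factR_S (k + S k)).
  replace (INR (S (k + S k))) with (2 * INR (S k)) by (rewrite !S_INR, plus_INR, S_INR; ring).
  field. repeat split; try apply Rgt_not_eq, factR_pos. apply not_0_INR. lia.
Qed.

Lemma sum_coefM_antidiag k :
  sum_f_R0 (fun n => coefM (S n) (S (k - n))) k = ecoef (S k) / INR (k + 2).
Proof.
  assert (Hv := vandermonde k (S (S k)) (S k)).
  rewrite tech5, (binom_gt k (S k)), Rmult_0_l, Rplus_0_r in Hv by lia.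
  rewrite (sum_eq _ (fun n => INR (binom k n) * INR (binom (S (S k)) (S k - n)) / factR (S (S k)))).
  2:{ intros n Hn. rewrite coefM_S, !binomR by lia.
      replace (S (S k) - (S k - n))%nat with (S n) by lia.
      replace (n + (k - n))%nat with k by lia.
      replace (S (k - n)) with (S k - n)%nat by lia.
      field. repeat split; apply Rgt_not_eq, factR_pos. }
  unfold Rdiv at 1. rewrite <- scal_sum, Hv, binomR by lia.
  replace (k + S (S k) - S k)%nat with (S k) by lia.
  unfold ecoef. replace (2 * S k)%nat with (k + S (S k))%nat by lia.
  rewrite (factR_S (S k)). replace (k + 2)%nat with (S (S k)) by lia.
  field. repeat split; try apply Rgt_not_eq, factR_pos. apply not_0_INR. lia.
Qed.

Lemma coefM_S_bounds n m :
  0 <= coefM (S n) (S m) /\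
  INR (S n) * coefM (S n) (S m) <= 2 ^ (n + m) / (factR n * factR m).
Proof.
  rewrite coefM_S, factR_S.
  assert (Hn := factR_pos n). assert (Hm := factR_pos m).
  assert (HSm := factR_pos (S m)). assert (Hb := factR_add_le n m).
  assert (Hle : factR m <= factR (S m)).
  { rewrite factR_S, S_INR. assert (0 <= INR m) by apply pos_INR. nra. }
  assert (HSn : 0 < INR (S n)) by (apply lt_0_INR; lia).
  assert (Hnm := factR_pos (n + m)). split.
  - apply Rlt_le, Rdiv_lt_0_compat; [lra|]. repeat apply Rmult_lt_0_compat; lra.
  - replace (INR (S n) * (factR (n + m) / (INR (S n) * factR n * factR (S m) * factR n * factR m)))
      with (factR (n + m) / (factR n * factR m) / (factR n * factR (S m)))
      by (field; repeat split; lra).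
    apply Rle_trans with (2 ^ (n + m) / (factR n * factR (S m))).
    + apply Rmult_le_compat_r. apply Rlt_le, Rinv_0_lt_compat, Rmult_lt_0_compat; lra.
      apply Rle_div_l. apply Rmult_lt_0_compat; lra. lra.
    + apply Rmult_le_compat_l. apply pow_le; lra.
      apply Rinv_le_contravar. apply Rmult_lt_0_compat; lra. apply Rmult_le_compat_l; lra.
Qed.

Lemma coefM_S_le n m : coefM (S n) (S m) <= 2 ^ (n + m) / (factR n * factR m).
Proof.
  destruct (coefM_S_bounds n m) as [H0 H1]. eapply Rle_trans; [|exact H1].
  rewrite S_INR. assert (0 <= INR n) by apply pos_INR. nra.
Qed.

Lemma ecoef_pos n : 0 < ecoef n.
Proof. apply Rdiv_lt_0_compat. apply factR_pos. apply pow_lt, factR_pos. Qed.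

Lemma ecoef_le n : ecoef n <= 4 ^ n / factR n.
Proof.
  assert (H := factR_add_le n n). replace (n + n)%nat with (2 * n)%nat in H by lia.
  replace (2 ^ (2 * n)) with (4 ^ n) in H by (rewrite pow_mult; f_equal; ring).
  assert (Hn := factR_pos n). unfold ecoef.
  replace (4 ^ n / factR n) with (4 ^ n * factR n * factR n / factR n ^ 3) by (field; lra).
  apply Rmult_le_compat_r; [|exact H]. apply Rlt_le, Rinv_0_lt_compat, pow_lt; lra.
Qed.

Lemma ecoef_rec n : INR (S n) ^ 2 * ecoef (S n) = (4 * INR n + 2) * ecoef n.
Proof.
  unfold ecoef. replace (2 * S n)%nat with (S (S (2 * n))) by lia.
  rewrite !factR_S, !S_INR, mult_INR. simpl (INR 2).
  assert (Hn := factR_pos n). assert (0 <= INR n) by apply pos_INR.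
  field. split; lra.
Qed.

Lemma ecoef_0 : ecoef 0 = 1.
Proof. unfold ecoef, factR. simpl. field. Qed.

Lemma ecoef_1 : ecoef 1 = 2.
Proof. unfold ecoef, factR. simpl. field. Qed.

(** * The partial derivatives of M *)

Definition ipow_re (n : nat) : R := Re (Ci ^ n)%C.
Definition ipow_im (n : nat) : R := Im (Ci ^ n)%C.

Lemma ipow_re_S n : ipow_re (S n) = - ipow_im n.
Proof.
  unfold ipow_re, ipow_im. rewrite Cpow_S. destruct (Ci ^ n)%C as [a b].
  unfold Ci, Cmult, Re, Im; simpl. ring.
Qed.

Lemma ipow_im_S n : ipow_im (S n) = ipow_re n.
Proof.
  unfold ipow_re, ipow_im. rewrite Cpow_S. destruct (Ci ^ n)%C as [a b].
  unfold Ci, Cmult, Re, Im; simpl. ring.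
Qed.

Lemma ipow_re_0 : ipow_re 0 = 1. Proof. reflexivity. Qed.
Lemma ipow_im_0 : ipow_im 0 = 0. Proof. reflexivity. Qed.

Lemma ipow_norm n : ipow_re n ^ 2 + ipow_im n ^ 2 = 1.
Proof.
  unfold ipow_re, ipow_im. rewrite <- Cmod2_alt, Cmod_pow, Cmod_Ci, pow1. ring.
Qed.

Lemma ipow_re_le_1 n : Rabs (ipow_re n) <= 1.
Proof.
  assert (H := ipow_norm n). assert (0 <= ipow_im n ^ 2) by apply pow2_ge_0.
  apply Rabs_le. nra.
Qed.

Lemma ipow_im_le_1 n : Rabs (ipow_im n) <= 1.
Proof.
  assert (H := ipow_norm n). assert (0 <= ipow_re n ^ 2) by apply pow2_ge_0.
  apply Rabs_le. nra.
Qed.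

Section BoundedSignDoubleSeries.
Variable s : nat -> R.
Hypothesis s_le_1 : forall k, Rabs (s k) <= 1.

(* [dser ipow_re] and [dser ipow_im] are the real and imaginary parts of the double
   series [SM] in M. *)
Definition dser (x y : R) : R :=
  Series (fun n => Series (fun m => s (S n + S m) * (x ^ S n * y ^ S m * coefM (S n) (S m)))).

Definition dser_row (y : R) (n : nat) : R :=
  Series (fun m => s (S n + S m) * (y ^ S m * coefM (S n) (S m))).

Let gexp (x : R) (n : nat) : R := Rabs x * ((2 * Rabs x) ^ n / factR n).

Lemma gexp_ge0 x n : 0 <= gexp x n.
Proof.
  assert (0 <= Rabs x) by apply Rabs_pos.
  apply Rmult_le_pos; [lra | apply Rdiv_le_0_compat; [apply pow_le; lra | apply factR_pos]].
Qed.

Lemma ex_series_gexp x : ex_series (gexp x).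
Proof. apply (ex_series_scal_l (Rabs x) (fun n => _ ^ n / _)), ex_series_pow_div_fact. Qed.

Lemma dser_term_le x y n m :
  Rabs (s (S n + S m) * (x ^ S n * y ^ S m * coefM (S n) (S m))) <= gexp x n * gexp y m.
Proof.
  destruct (coefM_S_bounds n m) as [Hc0 _]. assert (Hc := coefM_S_le n m).
  assert (Hx := Rabs_pos x). assert (Hy := Rabs_pos y).
  assert (Hxn : 0 <= Rabs x ^ S n) by (apply pow_le; lra).
  assert (Hym : 0 <= Rabs y ^ S m) by (apply pow_le; lra).
  rewrite !Rabs_mult, (Rabs_pos_eq (coefM _ _)), <- !RPow_abs by lra.
  apply Rle_trans with (1 * (Rabs x ^ S n * Rabs y ^ S m * (2 ^ (n + m) / (factR n * factR m)))).
  - apply Rmult_le_compat; [apply Rabs_pos | | apply s_le_1 |].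
    + apply Rmult_le_pos; [nra | lra].
    + apply Rmult_le_compat_l; [nra | exact Hc].
  - unfold gexp. rewrite !Rpow_mult_distr, pow_add. simpl pow. right.
    field. split; apply Rgt_not_eq, factR_pos.
Qed.

Lemma dser_comm x y : dser x y = dser y x.
Proof.
  unfold dser. rewrite (Series_swap _ (gexp x) (gexp y)).
  - apply Series_ext. intros n. apply Series_ext. intros m.
    rewrite coefM_S_comm, (Nat.add_comm (S m)). ring.
  - apply gexp_ge0.
  - apply gexp_ge0.
  - apply ex_series_gexp.
  - apply ex_series_gexp.
  - apply dser_term_le.
Qed.

Lemma dser_row_le y n : Rabs (dser_row y n) <= Series (gexp y) * 2 ^ n / factR n.
Proof.
  replace (Series (gexp y) * 2 ^ n / factR n) with (2 ^ n / factR n * Series (gexp y))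
    by (unfold Rdiv; ring).
  apply Series_dominated_scal; [|apply ex_series_gexp]. intros m.
  assert (H := dser_term_le 1 y n m). rewrite !pow1, Rmult_1_l in H.
  eapply Rle_trans; [exact H|]. right. unfold gexp. now rewrite Rabs_R1, Rmult_1_l, Rmult_1_r.
Qed.

Lemma dser_as_PSeries x y : dser x y = PSeries (PS_incr_1 (dser_row y)) x.
Proof.
  rewrite PSeries_incr_1. unfold PSeries. rewrite <- Series_scal_l.
  apply Series_ext. intros n. unfold dser_row. rewrite <- Series_scal_r, <- Series_scal_l.
  apply Series_ext. intros m. simpl. ring.
Qed.

Lemma is_derive_PSeries_dser_row y :
  forall x, is_derive (PSeries (PS_incr_1 (dser_row y))) x
                      (Series (fun n => INR (S n) * dser_row y n * x ^ n)).
Proof.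
  intros x. apply is_derive_PSeries. rewrite CV_radius_incr_1.
  apply (entire_of_factorial_bound _ (Series (gexp y)) 2); [lra | apply dser_row_le].
Qed.

Lemma dser_diag u :
  dser u u = Series (fun k => s (S (S k)) * u ^ S (S k) * (ecoef (S k) / INR (k + 2))).
Proof.
  unfold dser. rewrite (Series_antidiag _ (u ^ 2) (2 * Rabs u)).
  - apply Series_ext. intros k.
    rewrite (sum_eq _ (fun n => coefM (S n) (S (k - n)) * (s (S (S k)) * u ^ S (S k)))).
    + rewrite <- scal_sum, sum_coefM_antidiag. ring.
    + intros n Hn. replace (S n + S (k - n))%nat with (S (S k)) by lia.
      replace (u ^ S (S k)) with (u ^ S n * u ^ S (k - n)) by (rewrite <- pow_add; f_equal; lia).
      ring.
  - assert (H := Rabs_pos u). lra.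
  - intros n m. eapply Rle_trans; [apply dser_term_le|]. right. unfold gexp.
    rewrite <- (pow2_abs u), !Rpow_mult_distr, !pow_add. field.
    split; apply Rgt_not_eq, factR_pos.
Qed.

Lemma dser_row_weighted_term_le u n m :
  Rabs (INR (S n) * u ^ n * (s (S n + S m) * (u ^ S m * coefM (S n) (S m))))
  <= Rabs u * (2 * Rabs u) ^ (n + m) / (factR n * factR m).
Proof.
  destruct (coefM_S_bounds n m) as [Hc0 Hc].
  assert (Hu := Rabs_pos u). assert (Hs := s_le_1 (S n + S m)).
  assert (HK : 0 <= INR (S n) * coefM (S n) (S m)) by (apply Rmult_le_pos; [apply pos_INR | lra]).
  assert (Hun : 0 <= Rabs u ^ S (n + m)) by (apply pow_le; lra).
  replace (Rabs (INR (S n) * u ^ n * (s (S n + S m) * (u ^ S m * coefM (S n) (S m)))))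
    with (Rabs u ^ S (n + m) * (INR (S n) * coefM (S n) (S m)) * Rabs (s (S n + S m))).
  - replace (Rabs u * (2 * Rabs u) ^ (n + m) / (factR n * factR m))
      with (Rabs u ^ S (n + m) * (2 ^ (n + m) / (factR n * factR m)) * 1)
      by (rewrite Rpow_mult_distr; simpl; field; split; apply Rgt_not_eq, factR_pos).
    apply Rmult_le_compat; [| apply Rabs_pos | apply Rmult_le_compat_l | ]; nra.
  - rewrite !Rabs_mult, (Rabs_pos_eq (INR (S n))), (Rabs_pos_eq (coefM _ _)), <- !RPow_abs
      by (lra || apply pos_INR).
    replace (S (n + m)) with (n + S m)%nat by lia. rewrite pow_add. ring.
Qed.

Lemma dser_partial_diag u :
  Series (fun n => INR (S n) * dser_row u n * u ^ n)
  = Series (fun k => s (S (S k)) * u ^ S k * (ecoef (S k) / 2)).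
Proof.
  rewrite (Series_ext _ (fun n => Series (fun m =>
              INR (S n) * u ^ n * (s (S n + S m) * (u ^ S m * coefM (S n) (S m)))))).
  2:{ intros n. unfold dser_row. rewrite <- Series_scal_l, <- Series_scal_r.
      apply Series_ext. intros m. ring. }
  rewrite (Series_antidiag _ (Rabs u) (2 * Rabs u)).
  - apply Series_ext. intros k.
    rewrite (sum_eq _ (fun n => INR (S n) * coefM (S n) (S (k - n)) * (s (S (S k)) * u ^ S k))).
    + rewrite <- scal_sum, sum_coefM_antidiag_weighted. ring.
    + intros n Hn. replace (S n + S (k - n))%nat with (S (S k)) by lia.
      replace (u ^ S k) with (u ^ n * u ^ S (k - n)) by (rewrite <- pow_add; f_equal; lia).
      ring.
  - assert (H := Rabs_pos u). lra.
  - apply dser_row_weighted_term_le.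
Qed.

Lemma is_derive_dser_l_diag u :
  is_derive (fun x => dser x u) u (Series (fun k => s (S (S k)) * u ^ S k * (ecoef (S k) / 2))).
Proof.
  rewrite <- dser_partial_diag.
  apply (is_derive_ext (PSeries (PS_incr_1 (dser_row u)))).
  - intros x. symmetry. apply dser_as_PSeries.
  - apply is_derive_PSeries_dser_row.
Qed.

End BoundedSignDoubleSeries.

Lemma termM_eq x y r s :
  termM x y r s = (Ci ^ (r + s) * RtoC (x ^ r * y ^ s * coefM r s))%C.
Proof.
  unfold termM. rewrite !Cpow_mult_l, Cpow_add_r, !RtoC_mult, <- !RtoC_pow. ring.
Qed.

Lemma Re_SM x y : Re (SM x y) = dser ipow_re x y.
Proof.
  apply Series_ext. intros n. apply Series_ext. intros m.
  rewrite termM_eq. unfold ipow_re. destruct (Ci ^ _)%C. simpl. ring.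
Qed.

Lemma Im_SM x y : Im (SM x y) = dser ipow_im x y.
Proof.
  apply Series_ext. intros n. apply Series_ext. intros m.
  rewrite termM_eq. unfold ipow_im. destruct (Ci ^ _)%C. simpl. ring.
Qed.

Lemma M_eq x y : M x y = (x + y + 2 * dser ipow_im x y, - 2 * dser ipow_re x y).
Proof.
  unfold M. rewrite <- Re_SM, <- Im_SM. destruct (SM x y) as [a b].
  unfold RtoC, Ci, Cmult, Cminus, Cplus, Copp. simpl. f_equal; ring.
Qed.

Lemma M_comm x y : M x y = M y x.
Proof.
  rewrite !M_eq, (dser_comm _ ipow_re_le_1 x), (dser_comm _ ipow_im_le_1 x).
  f_equal. ring.
Qed.

Lemma tau_eq u : tau u = (- dser ipow_re u u, - u - dser ipow_im u u).
Proof.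
  unfold tau. rewrite M_eq. unfold Cdiv, Cinv, RtoC, Ci, Cmult. simpl. f_equal; field.
Qed.

Definition E_re : R -> R := PSeries (fun n => ipow_re n * ecoef n).
Definition E_im : R -> R := PSeries (fun n => ipow_im n * ecoef n).

Lemma signed_ecoef_le (s : nat -> R) : (forall k, Rabs (s k) <= 1) ->
  forall n, Rabs (s n * ecoef n) <= 1 * 4 ^ n / factR n.
Proof.
  intros Hs n. assert (H1 := Hs n). assert (H2 := ecoef_le n). assert (H3 := ecoef_pos n).
  assert (0 <= Rabs (s n)) by apply Rabs_pos.
  rewrite Rabs_mult, (Rabs_pos_eq (ecoef n)), Rmult_1_l by lra. nra.
Qed.

Lemma entire_signed_ecoef (s : nat -> R) : (forall k, Rabs (s k) <= 1) ->
  entire (fun n => s n * ecoef n).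
Proof. intros Hs. apply (entire_of_factorial_bound _ 1 4); [lra | now apply signed_ecoef_le]. Qed.

Lemma is_derive_M_l u : is_derive (fun x => M x u) u (E_re u, E_im u).
Proof.
  apply (is_derive_ext (fun x => (x + u + 2 * dser ipow_im x u, - 2 * dser ipow_re x u) : C)).
  { intros x. symmetry. apply M_eq. }
  apply is_derive_pair.
  - replace (E_re u)
      with (1 + 0 + 2 * Series (fun k => ipow_im (S (S k)) * u ^ S k * (ecoef (S k) / 2))).
    + apply is_derive_Rplus; [apply is_derive_Rplus |].
      * apply (@is_derive_id R_AbsRing).
      * exact (is_derive_const u u).
      * apply is_derive_scal, (is_derive_dser_l_diag _ ipow_im_le_1).
    + unfold E_re. rewrite PSeries_split_0 by apply (entire_signed_ecoef _ ipow_re_le_1).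
      rewrite ecoef_0, ipow_re_0, <- Series_scal_l.
      f_equal; [ring|]. apply Series_ext. intros k. rewrite ipow_im_S. field.
  - replace (E_im u) with (- 2 * Series (fun k => ipow_re (S (S k)) * u ^ S k * (ecoef (S k) / 2))).
    + apply is_derive_scal, (is_derive_dser_l_diag _ ipow_re_le_1).
    + unfold E_im. rewrite PSeries_split_0 by apply (entire_signed_ecoef _ ipow_im_le_1).
      rewrite ipow_im_0, Rmult_0_l, Rplus_0_l, <- Series_scal_l.
      apply Series_ext. intros k. rewrite ipow_re_S, ipow_im_S. field.
Qed.

Lemma is_derive_M_r u : is_derive (fun y => M u y) u (E_re u, E_im u).
Proof. apply (is_derive_ext (fun x => M x u)); [intros; apply M_comm | apply is_derive_M_l]. Qed.

(* Coefficientwise, both equations reduce to the recurrence [ecoef_rec]. *)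
Lemma coupled_system_E : coupled_system E_re E_im.
Proof.
  unfold E_re, E_im.
  set (a := fun n => ipow_re n * ecoef n). set (b := fun n => ipow_im n * ecoef n).
  assert (Ha : entire a) by apply (entire_signed_ecoef _ ipow_re_le_1).
  assert (Hb : entire b) by apply (entire_signed_ecoef _ ipow_im_le_1).
  assert (Ha1 := entire_derive _ Ha). assert (Ha2 := entire_derive _ Ha1).
  assert (Hb1 := entire_derive _ Hb). assert (Hb2 := entire_derive _ Hb1).
  exists (PSeries (PS_derive a)), (PSeries (PS_derive (PS_derive a))),
         (PSeries (PS_derive b)), (PSeries (PS_derive (PS_derive b))).
  refine (conj _ (conj _ (conj _ (conj _ (conj _ _)))));
    try (intros t; apply is_derive_entire; assumption);
    intros t; rewrite Rmult_assoc, <- !PSeries_incr_1.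
  - replace (PSeries (PS_incr_1 (PS_derive (PS_derive a))) t + PSeries (PS_derive a) t
             + 4 * PSeries (PS_incr_1 (PS_derive b)) t + 2 * PSeries b t)
      with (1 * PSeries (PS_incr_1 (PS_derive (PS_derive a))) t + 1 * PSeries (PS_derive a) t
            + 4 * PSeries (PS_incr_1 (PS_derive b)) t + 2 * PSeries b t) by ring.
    rewrite PSeries_lincomb4 by first [assumption | apply entire_incr_1; assumption].
    apply PSeries_coef_0. intros [|m]; unfold PS_incr_1, PS_derive, a, b.
    + rewrite ipow_im_0, ipow_re_S, ipow_im_0. change (@zero R_NormedModule) with 0. ring.
    + rewrite !ipow_re_S, !ipow_im_S, !S_INR.
      assert (R := ecoef_rec (S m)). rewrite !S_INR in R.
      transitivity (- ipow_re m * ((INR m + 1 + 1) ^ 2 * ecoef (S (S m))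
                                   - (4 * (INR m + 1) + 2) * ecoef (S m))); [ring|].
      rewrite R. ring.
  - replace (PSeries (PS_incr_1 (PS_derive (PS_derive b))) t + PSeries (PS_derive b) t
             - 4 * PSeries (PS_incr_1 (PS_derive a)) t - 2 * PSeries a t)
      with (1 * PSeries (PS_incr_1 (PS_derive (PS_derive b))) t + 1 * PSeries (PS_derive b) t
            + (-4) * PSeries (PS_incr_1 (PS_derive a)) t + (-2) * PSeries a t) by ring.
    rewrite PSeries_lincomb4 by first [assumption | apply entire_incr_1; assumption].
    apply PSeries_coef_0. intros [|m]; unfold PS_incr_1, PS_derive, a, b.
    + rewrite ipow_im_S, ipow_re_0, ecoef_1, ecoef_0.
      change (@zero R_NormedModule) with 0. simpl. ring.
    + rewrite !ipow_im_S, !ipow_re_S, !S_INR.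
      assert (R := ecoef_rec (S m)). rewrite !S_INR in R.
      transitivity (- ipow_im m * ((INR m + 1 + 1) ^ 2 * ecoef (S (S m))
                                   - (4 * (INR m + 1) + 2) * ecoef (S m))); [ring|].
      rewrite R. ring.
Qed.

Lemma E_re_0 : E_re 0 = 1.
Proof. unfold E_re. rewrite PSeries_0, ipow_re_0, ecoef_0. ring. Qed.

Lemma E_im_0 : E_im 0 = 0.
Proof. unfold E_im. rewrite PSeries_0, ipow_im_0. ring. Qed.

(* E(u) = e^{2iu} J0(2u): e^{-2iu} E(u) - J0(2u) solves the Bessel equation and vanishes at 0. *)
Lemma E_closed_form u : 0 <= u -> E_re u = cos (2 * u) * J0s u /\ E_im u = sin (2 * u) * J0s u.
Proof.
  intros Hu.
  assert (Hre : rot E_re E_im u - J0s u = 0).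
  { apply (bessel0_solution_eq_0 (fun t => rot E_re E_im t - J0s t)); [| |exact Hu].
    - apply bessel0_solution_minus; [|apply bessel0_solution_J0s].
      apply coupled_system_rot, coupled_system_E.
    - unfold rot. rewrite Rmult_0_r, cos_0, sin_0, E_re_0, E_im_0, J0s_0. ring. }
  assert (Him : rot E_im (fun t => - E_re t) u = 0).
  { apply (bessel0_solution_eq_0 _
      (coupled_system_rot _ _ (coupled_system_swap _ _ coupled_system_E))); [|exact Hu].
    unfold rot. rewrite Rmult_0_r, cos_0, sin_0, E_im_0. ring. }
  unfold rot in Hre, Him. destruct (rot_inverse (2 * u) (E_re u) (E_im u)) as [Ere Eim].
  split; [rewrite Ere | rewrite Eim];
    replace (cos (2 * u) * E_re u + sin (2 * u) * E_im u) with (J0s u) by lra;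
    replace (cos (2 * u) * E_im u - sin (2 * u) * E_re u) with 0 by lra; ring.
Qed.

Lemma stationary_diag_iff u : stationary_diag u <-> 0 < u /\ J0s u = 0.
Proof.
  split.
  - intros [Hu [H1 _]]. split; [exact Hu|].
    assert (E := is_derive_C_unique _ _ _ _ (is_derive_M_l u) H1).
    destruct (E_closed_form u (Rlt_le _ _ Hu)) as [Hre Him].
    injection E as Ere Eim. rewrite Ere in Hre. rewrite Eim in Him.
    rewrite (proj1 (rot_inverse (2 * u) (J0s u) 0)), <- Hre, <- Him. ring.
  - intros [Hu H0]. destruct (E_closed_form u (Rlt_le _ _ Hu)) as [Hre Him].
    assert (E : (E_re u, E_im u) = RtoC 0) by (rewrite Hre, Him, H0; unfold RtoC; f_equal; ring).
    split; [exact Hu|]. rewrite <- E. split; [apply is_derive_M_l | apply is_derive_M_r].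
Qed.

(** * The modulus of tau *)

Definition tcoef (s : nat -> R) (n : nat) : R :=
  match n with O => 0 | S m => - s (S m) * ecoef m / INR (S m) end.

Definition T_re : R -> R := PSeries (tcoef ipow_re).
Definition T_im : R -> R := PSeries (tcoef ipow_im).

Lemma entire_tcoef (s : nat -> R) : (forall k, Rabs (s k) <= 1) -> entire (tcoef s).
Proof.
  intros Hs. apply (entire_of_factorial_bound _ 1 4); [lra|]. intros [|m].
  - unfold tcoef. rewrite Rabs_R0. apply Rdiv_le_0_compat; [lra | apply factR_pos].
  - assert (Hs1 := Hs (S m)). assert (He := ecoef_le m). assert (He0 := ecoef_pos m).
    assert (HS : 0 < INR (S m)) by (apply lt_0_INR; lia). assert (Hm := factR_pos m).
    assert (0 <= Rabs (s (S m))) by apply Rabs_pos.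
    assert (HX : 0 <= 4 ^ m / factR m / INR (S m))
      by (apply Rdiv_le_0_compat; [apply Rdiv_le_0_compat; [apply pow_le; lra|]|]; lra).
    unfold tcoef. rewrite Rabs_div, Rabs_mult, Rabs_Ropp, (Rabs_pos_eq (ecoef m)),
      (Rabs_pos_eq (INR (S m))) by lra.
    replace (1 * 4 ^ S m / factR (S m)) with (4 * (4 ^ m / factR m / INR (S m)))
      by (rewrite factR_S, <- tech_pow_Rmult; field; lra).
    apply Rle_trans with (4 ^ m / factR m / INR (S m)); [|lra].
    apply Rmult_le_compat_r; [apply Rlt_le, Rinv_0_lt_compat; lra | nra].
Qed.

Lemma tau_as_T u : tau u = (T_re u, T_im u).
Proof.
  rewrite tau_eq, !dser_diag by (apply ipow_re_le_1 || apply ipow_im_le_1).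
  unfold T_re, T_im.
  rewrite !PSeries_split_01 by (apply entire_tcoef; apply ipow_re_le_1 || apply ipow_im_le_1).
  unfold tcoef at 1 2 4 5. rewrite ipow_re_S, ipow_im_S, ipow_re_0, ipow_im_0, ecoef_0.
  unfold Rminus. rewrite <- !Series_opp. f_equal.
  - replace (0 + - - 0 * 1 / INR 1 * u) with 0 by (simpl INR; field). rewrite Rplus_0_l.
    apply Series_ext. intros k. unfold tcoef. replace (k + 2)%nat with (S (S k)) by lia. field.
    apply not_0_INR. lia.
  - replace (0 + - (1) * 1 / INR 1 * u) with (- u) by (simpl INR; field). f_equal.
    apply Series_ext. intros k. unfold tcoef. replace (k + 2)%nat with (S (S k)) by lia. field.
    apply not_0_INR. lia.
Qed.

Lemma is_derive_T_re t : is_derive T_re t (E_im t).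
Proof.
  replace (E_im t) with (PSeries (PS_derive (tcoef ipow_re)) t).
  - apply is_derive_entire, entire_tcoef, ipow_re_le_1.
  - apply PSeries_ext. intros n. unfold PS_derive, tcoef. rewrite ipow_re_S. field.
    apply not_0_INR. lia.
Qed.

Lemma is_derive_T_im t : is_derive T_im t (- E_re t).
Proof.
  replace (- E_re t) with (PSeries (PS_derive (tcoef ipow_im)) t).
  - apply is_derive_entire, entire_tcoef, ipow_im_le_1.
  - unfold E_re. rewrite <- (Rmult_1_l (PSeries (fun n => ipow_re n * ecoef n) t)),
      Ropp_mult_distr_l, <- PSeries_scal.
    apply PSeries_ext. intros n. unfold PS_derive, PS_scal, tcoef.
    change (scal (- (1)) ?b) with (- (1) * b). rewrite ipow_im_S. field. apply not_0_INR. lia.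
Qed.

Definition tau_p (t : R) : R := t * J0s' t / 2.
Definition tau_q (t : R) : R := - t * J0s t.

Lemma is_derive_tau_p t : is_derive tau_p t (- 2 * t * J0s t).
Proof.
  replace (- 2 * t * J0s t) with (/ 2 * (1 * J0s' t + t * J0s'' t))
    by (generalize (J0s_ode t); lra).
  apply (is_derive_ext (fun t => / 2 * (t * J0s' t))).
  { intros x. change (/ 2 * (x * J0s' x) = tau_p x). unfold tau_p. field. }
  apply is_derive_scal, (is_derive_Rmult (fun t => t)); [apply (@is_derive_id R_AbsRing)|].
  apply is_derive_J0s'.
Qed.

Lemma is_derive_tau_q t : is_derive tau_q t (- J0s t - t * J0s' t).
Proof.
  replace (- J0s t - t * J0s' t) with (-1 * (1 * J0s t + t * J0s' t)) by ring.
  apply (is_derive_ext (fun t => -1 * (t * J0s t))).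
  { intros x. change (-1 * (x * J0s x) = tau_q x). unfold tau_q. ring. }
  apply is_derive_scal, (is_derive_Rmult (fun t => t)); [apply (@is_derive_id R_AbsRing)|].
  apply is_derive_J0s.
Qed.

(* Both sides vanish at 0 and, by [E_closed_form] and [J0s_ode], have the same derivative
   on [0, u]. *)
Lemma T_closed_form u : 0 <= u ->
  T_re u = rot tau_p (fun t => - tau_q t) u /\ T_im u = rot tau_q tau_p u.
Proof.
  intros Hu. split.
  - apply (eq_of_is_derive_eq _ _ E_im u Hu); [intros; apply is_derive_T_re| |].
    + intros x [Hx _]. rewrite (proj2 (E_closed_form x Hx)).
      replace (sin (2 * x) * J0s x)
        with (cos (2 * x) * (- 2 * x * J0s x + 2 * - tau_q x)
              + sin (2 * x) * (- (- J0s x - x * J0s' x) - 2 * tau_p x))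
        by (unfold tau_p, tau_q; field).
      apply (is_derive_rot tau_p (fun t => - tau_q t)).
      * apply is_derive_tau_p.
      * apply is_derive_Ropp, is_derive_tau_q.
    + unfold T_re, rot, tau_p, tau_q. rewrite PSeries_0. simpl. field.
  - apply (eq_of_is_derive_eq _ _ (fun t => - E_re t) u Hu); [intros; apply is_derive_T_im| |].
    + intros x [Hx _]. rewrite (proj1 (E_closed_form x Hx)).
      replace (- (cos (2 * x) * J0s x))
        with (cos (2 * x) * (- J0s x - x * J0s' x + 2 * tau_p x)
              + sin (2 * x) * (- 2 * x * J0s x - 2 * tau_q x))
        by (unfold tau_p, tau_q; field).
      apply (is_derive_rot tau_q tau_p); [apply is_derive_tau_q | apply is_derive_tau_p].
    + unfold T_im, rot, tau_p, tau_q. rewrite PSeries_0. simpl. field.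
Qed.

Lemma Cmod_tau_sq u : 0 <= u -> Cmod (tau u) ^ 2 = tau_p u ^ 2 + tau_q u ^ 2.
Proof.
  intros Hu. rewrite Cmod2_alt, tau_as_T. simpl Re. simpl Im.
  destruct (T_closed_form u Hu) as [-> ->]. unfold rot.
  replace (tau_q u ^ 2) with ((- tau_q u) ^ 2) by ring.
  rewrite <- (rot_norm (2 * u) (tau_p u) (- tau_q u)). ring.
Qed.

Lemma Cmod_tau_le a b : 0 <= a <= b -> Cmod (tau a) <= Cmod (tau b).
Proof.
  intros [Ha Hab].
  set (N := fun t => - (tau_p t * tau_p t + tau_q t * tau_q t)).
  assert (HN : N b <= N a).
  { apply (derive_nonpos_le N (fun t => - (2 * t * J0s t ^ 2)) a b Hab).
    - intros x _. unfold N.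
      replace (- (2 * x * J0s x ^ 2))
        with (- (- 2 * x * J0s x * tau_p x + tau_p x * (- 2 * x * J0s x)
                 + ((- J0s x - x * J0s' x) * tau_q x + tau_q x * (- J0s x - x * J0s' x))))
        by (unfold tau_p, tau_q; field).
      apply is_derive_Ropp, is_derive_Rplus; apply is_derive_Rmult;
        apply is_derive_tau_p || apply is_derive_tau_q.
    - intros x [Hx _]. assert (0 <= J0s x ^ 2) by apply pow2_ge_0. nra. }
  apply Rsqr_incr_0_var; [|apply Cmod_ge_0]. unfold Rsqr.
  replace (Cmod (tau a) * Cmod (tau a)) with (Cmod (tau a) ^ 2) by ring.
  replace (Cmod (tau b) * Cmod (tau b)) with (Cmod (tau b) ^ 2) by ring.
  rewrite !Cmod_tau_sq by lra. unfold N in HN. lra.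
Qed.

(** * Numerical bounds on J0 *)

Definition J0_term (w : R) (k : nat) : R := (-1) ^ k * w ^ k / factR k ^ 2.

(* [sum_{k<7} (-w)^k/(k!)^2], the Taylor polynomial of [J0 (2 sqrt w)]. *)
Definition J0_poly7 (w : R) : R :=
  1 - w + w ^ 2 / 4 - w ^ 3 / 36 + w ^ 4 / 576 - w ^ 5 / 14400 + w ^ 6 / 518400.

Lemma J0_as_series u : J0 (2 * u) = Series (J0_term (u ^ 2)).
Proof.
  apply Series_ext. intros k. unfold J0_term, factR.
  replace (2 * u / 2) with u by field. now rewrite pow_mult.
Qed.

Lemma J0_term_S w n : J0_term w (S n) = J0_term w n * (- w / INR (S n) ^ 2).
Proof.
  unfold J0_term. rewrite factR_S, <- !tech_pow_Rmult.
  assert (HX : INR (S n) <> 0) by (apply not_0_INR; lia). assert (HF := factR_pos n).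
  field. split; lra.
Qed.

Lemma ex_series_J0_term w : 0 <= w -> ex_series (J0_term w).
Proof.
  intros Hw. apply (Series_dominated _ (fun k => w ^ k / factR k)); [|apply ex_series_pow_div_fact].
  intros k. unfold J0_term, Rdiv.
  assert (Hk := factR_ge_1 k).
  rewrite !Rabs_mult, pow_1_abs, Rmult_1_l, Rabs_pos_eq, Rabs_pos_eq
    by first [apply pow_le; lra | apply Rlt_le, Rinv_0_lt_compat, pow_lt; lra].
  apply Rmult_le_compat_l; [apply pow_le; lra|].
  apply Rinv_le_contravar; [lra | simpl; nra].
Qed.

Lemma J0_term_tail_le w k : 0 <= w <= 3/2 ->
  Rabs (J0_term w (7 + k)) <= w ^ 7 / factR 7 ^ 2 * (/ 2) ^ k.
Proof.
  intros Hw. induction k as [|k IH].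
  - unfold J0_term. rewrite Nat.add_0_r, Rmult_1_r. unfold Rdiv.
    rewrite !Rabs_mult, pow_1_abs, Rmult_1_l, Rabs_pos_eq, Rabs_pos_eq
      by first [apply pow_le; lra | apply Rlt_le, Rinv_0_lt_compat, pow_lt, factR_pos].
    lra.
  - replace (7 + S k)%nat with (S (7 + k)) by lia. rewrite J0_term_S, Rabs_mult.
    assert (H8 : 8 <= INR (S (7 + k))).
    { rewrite S_INR, plus_INR. simpl. assert (0 <= INR k) by apply pos_INR. lra. }
    assert (Hr : Rabs (- w / INR (S (7 + k)) ^ 2) <= / 2).
    { unfold Rdiv. rewrite Rabs_mult, Rabs_Ropp, (Rabs_pos_eq w), Rabs_pos_eq
        by first [lra | apply Rlt_le, Rinv_0_lt_compat, pow_lt; lra].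
      apply Rle_trans with (w * / 64).
      - apply Rmult_le_compat_l; [lra|]. apply Rinv_le_contravar; [lra | nra].
      - lra. }
    replace (w ^ 7 / factR 7 ^ 2 * (/ 2) ^ S k) with (w ^ 7 / factR 7 ^ 2 * (/ 2) ^ k * / 2)
      by (simpl; ring).
    apply Rmult_le_compat; [apply Rabs_pos | apply Rabs_pos | exact IH | exact Hr].
Qed.

Lemma J0_poly7_approx w : 0 <= w <= 3/2 ->
  Rabs (Series (J0_term w) - J0_poly7 w) <= 2 * w ^ 7 / 5040 ^ 2.
Proof.
  intros Hw.
  rewrite (Series_incr_n (J0_term w) 7) by (lia || apply ex_series_J0_term; lra).
  replace (sum_f_R0 (J0_term w) (pred 7)) with (J0_poly7 w)
    by (unfold J0_poly7, J0_term, factR; simpl; field).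
  replace (J0_poly7 w + Series (fun k => J0_term w (7 + k)) - J0_poly7 w)
    with (Series (fun k => J0_term w (7 + k))) by ring.
  eapply Rle_trans.
  - apply (Series_dominated_scal _ (fun k => (/ 2) ^ k) (w ^ 7 / factR 7 ^ 2)).
    + intros k. now apply J0_term_tail_le.
    + apply ex_series_geom. rewrite Rabs_pos_eq; lra.
  - rewrite Series_geom by (rewrite Rabs_pos_eq; lra).
    replace (factR 7) with 5040 by (unfold factR; rewrite INR_IZR_INZ; reflexivity).
    right. field.
Qed.

Lemma J0_poly7_decr w b : 0 <= w <= b -> b <= 36/25 -> J0_poly7 b <= J0_poly7 w.
Proof.
  intros Hw Hb.
  apply (derive_nonpos_le J0_poly7
    (fun w => -1 + w / 2 - w ^ 2 / 12 + w ^ 3 / 144 - w ^ 4 / 2880 + w ^ 5 / 86400)); [lra| |].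
  - intros x _. unfold J0_poly7. auto_derive; [easy | field].
  - intros x Hx.
    assert (0 <= x ^ 2 * (12 - x)) by (apply Rmult_le_pos; [apply pow2_ge_0 | lra]).
    assert (0 <= x ^ 4 * (30 - x)) by (apply Rmult_le_pos; [apply pow_le | ]; lra).
    replace (x ^ 3) with (x ^ 2 * x) by ring. replace (x ^ 5) with (x ^ 4 * x) by ring. nra.
Qed.

Lemma J0_pos v : 0 <= v <= 6/5 -> 0 < J0 (2 * v).
Proof.
  intros Hv. rewrite J0_as_series.
  assert (Hw : 0 <= v ^ 2 <= 36/25).
  { split; [apply pow2_ge_0|]. replace (36/25) with ((6/5) ^ 2) by field. apply pow_incr. lra. }
  assert (Ha := J0_poly7_approx (v ^ 2) ltac:(lra)).
  assert (Hd := J0_poly7_decr (v ^ 2) (36/25) Hw (Rle_refl _)).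
  assert (Hp : (v ^ 2) ^ 7 <= (36/25) ^ 7) by (apply pow_incr; lra).
  assert (J0_poly7 (36/25) - 2 * (36/25) ^ 7 / 5040 ^ 2 > 0) by (unfold J0_poly7; lra).
  apply Rabs_le_between in Ha. lra.
Qed.

Lemma J0_neg : J0 (2 * (121/100)) < 0.
Proof.
  rewrite J0_as_series. replace ((121/100) ^ 2) with (14641/10000) by field.
  assert (Ha := J0_poly7_approx (14641/10000) ltac:(lra)).
  assert (J0_poly7 (14641/10000) + 2 * (14641/10000) ^ 7 / 5040 ^ 2 < 0) by (unfold J0_poly7; lra).
  apply Rabs_le_between in Ha. lra.
Qed.

(** * The first stationary point *)

Lemma J0s_first_zero :
  exists us, 6/5 < us < 121/100 /\ J0s us = 0 /\ forall v, 0 <= v < us -> J0s v <> 0.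
Proof.
  destruct (first_zero J0s (6/5) (121/100)) as (z & Hz & Hz0 & Hbelow).
  - lra.
  - apply continuity_J0s.
  - rewrite <- J0_J0s. apply J0_pos. lra.
  - rewrite <- J0_J0s. apply J0_neg.
  - exists z. split; [exact Hz | split; [exact Hz0|]]. intros v Hv.
    destruct (Rle_lt_dec v (6/5)) as [Hle|Hgt].
    + rewrite <- J0_J0s. apply Rgt_not_eq, J0_pos. lra.
    + apply Hbelow. lra.
Qed.

Theorem proposition2 :
  exists us : R,
    stationary_diag us /\
    (forall u, stationary_diag u -> us <= u) /\
    J0 (2 * us) = 0 /\
    (forall v, 0 < v < us -> J0 (2 * v) <> 0) /\
    6 / 5 < us < 121 / 100 /\
    (forall u, stationary_diag u -> Cmod (tau us) <= Cmod (tau u)).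
Proof.
  destruct J0s_first_zero as (us & Hbounds & Hzero & Hbelow).
  assert (Hmin : forall u, stationary_diag u -> us <= u).
  { intros u [Hu Hz]%stationary_diag_iff. apply Rnot_lt_le. intros Hlt.
    apply (Hbelow u); [lra | exact Hz]. }
  exists us. refine (conj _ (conj Hmin (conj _ (conj _ (conj Hbounds _))))).
  - apply stationary_diag_iff. split; [lra | exact Hzero].
  - now rewrite J0_J0s.
  - intros v Hv. rewrite J0_J0s. apply Hbelow. lra.
  - intros u Hu. apply Cmod_tau_le. split; [lra | now apply Hmin].
Qed.
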